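(* Let $A\bowtie^{\theta} I$ be an amalgamated Banach algebra as in the context. If $A$ and $I$ are weakly amenable, then $A\bowtie^{\theta} I$ is weakly amenable.
   Context: Let $A$ and $B$ be Banach algebras, $\theta:A\to B$ a continuous algebra homomorphism with $\|\theta\|\le 1$, and $I$ a closed two-sided ideal of $B$. The amalgamated Banach algebra $A\bowtie^{\theta} I$ is the Banach space $\{(a,i): a\in A,\ i\in I\}$ with norm $\|(a,i)\|=\|a\|+\|i\|$ and product $(a,i)\cdot(a',i')=(aa',\ \theta(a)i'+i\theta(a')+ii')$. A Banach algebra $C$ is weakly amenable if every bounded derivation $D:C\to C^*$ (i.e. bounded linear with $D(ab)=a\cdot D(b)+D(a)\cdot b$, where $\langle a\cdot f,b\rangle=f(ba)$, $\langle f\cdot a,b\rangle=f(ab)$) is inner, i.e. of the form $D(a)=a\cdot f-f\cdot a$ for some $f\in C^*$. *)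

From Stdlib Require Import Reals.
Open Scope R_scope.

Record Cplx := mkC { Cre : R; Cim : R }.
Definition C0 : Cplx := mkC 0 0.
Definition C1 : Cplx := mkC 1 0.
Definition Cadd (z w : Cplx) : Cplx := mkC (Cre z + Cre w) (Cim z + Cim w).
Definition Copp (z : Cplx) : Cplx := mkC (- Cre z) (- Cim z).
Definition Csub (z w : Cplx) : Cplx := Cadd z (Copp w).
Definition Cmul (z w : Cplx) : Cplx :=
  mkC (Cre z * Cre w - Cim z * Cim w) (Cre z * Cim w + Cim z * Cre w).
Definition Cabs (z : Cplx) : R := sqrt (Cre z * Cre z + Cim z * Cim z).

Record BanachAlgebra := {
  ba_car :> Type;
  ba_zero : ba_car;
  ba_add : ba_car -> ba_car -> ba_car;
  ba_opp : ba_car -> ba_car;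
  ba_scal : Cplx -> ba_car -> ba_car;
  ba_mul : ba_car -> ba_car -> ba_car;
  ba_norm : ba_car -> R;
  ba_addA : forall x y z, ba_add x (ba_add y z) = ba_add (ba_add x y) z;
  ba_addC : forall x y, ba_add x y = ba_add y x;
  ba_add0 : forall x, ba_add ba_zero x = x;
  ba_addN : forall x, ba_add x (ba_opp x) = ba_zero;
  ba_scalDr : forall c x y, ba_scal c (ba_add x y) = ba_add (ba_scal c x) (ba_scal c y);
  ba_scalDl : forall c d x, ba_scal (Cadd c d) x = ba_add (ba_scal c x) (ba_scal d x);
  ba_scalA : forall c d x, ba_scal (Cmul c d) x = ba_scal c (ba_scal d x);
  ba_scal1 : forall x, ba_scal C1 x = x;
  ba_mulA : forall x y z, ba_mul x (ba_mul y z) = ba_mul (ba_mul x y) z;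
  ba_mulDl : forall x y z, ba_mul (ba_add x y) z = ba_add (ba_mul x z) (ba_mul y z);
  ba_mulDr : forall x y z, ba_mul x (ba_add y z) = ba_add (ba_mul x y) (ba_mul x z);
  ba_scal_mull : forall c x y, ba_scal c (ba_mul x y) = ba_mul (ba_scal c x) y;
  ba_scal_mulr : forall c x y, ba_scal c (ba_mul x y) = ba_mul x (ba_scal c y);
  ba_norm_ge0 : forall x, 0 <= ba_norm x;
  ba_norm_eq0 : forall x, ba_norm x = 0 -> x = ba_zero;
  ba_norm_triangle : forall x y, ba_norm (ba_add x y) <= ba_norm x + ba_norm y;
  ba_norm_scal : forall c x, ba_norm (ba_scal c x) = Cabs c * ba_norm x;
  ba_norm_mul : forall x y, ba_norm (ba_mul x y) <= ba_norm x * ba_norm y;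
  ba_complete : forall u : nat -> ba_car,
    (forall eps, 0 < eps -> exists N, forall n m, (N <= n)%nat -> (N <= m)%nat ->
        ba_norm (ba_add (u n) (ba_opp (u m))) < eps) ->
    exists l, forall eps, 0 < eps -> exists N, forall n, (N <= n)%nat ->
        ba_norm (ba_add (u n) (ba_opp l)) < eps
}.

Arguments ba_zero {_}. Arguments ba_add {_}. Arguments ba_opp {_}.
Arguments ba_scal {_}. Arguments ba_mul {_}. Arguments ba_norm {_}.

(** * Weak amenability, relative to a (sub)space given by a predicate P.
   The Banach algebra is the set {x | P x} with the given operations;
   a functional on it is represented by any function X -> Cplx, only its
   values on P matter.  Elements of the dual act by
   <a.f, b> = f(ba),  <f.a, b> = f(ab).                                      *)
Section WA.
Context {X : Type} (add : X -> X -> X) (scal : Cplx -> X -> X)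
  (mul : X -> X -> X) (norm : X -> R) (P : X -> Prop).

Definition bounded_functional_on (f : X -> Cplx) : Prop :=
  (forall x y, P x -> P y -> f (add x y) = Cadd (f x) (f y)) /\
  (forall c x, P x -> f (scal c x) = Cmul c (f x)) /\
  (exists M, forall x, P x -> Cabs (f x) <= M * norm x).

(* D : C -> C^*, written curried: D a b = <D(a), b> *)
Definition bounded_derivation_on (D : X -> X -> Cplx) : Prop :=
  (forall a, P a -> bounded_functional_on (D a)) /\
  (forall a a' b, P a -> P a' -> P b -> D (add a a') b = Cadd (D a b) (D a' b)) /\
  (forall c a b, P a -> P b -> D (scal c a) b = Cmul c (D a b)) /\
  (exists M, forall a b, P a -> P b -> Cabs (D a b) <= M * norm a * norm b) /\
  (* D(ab) = a.D(b) + D(a).b *)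
  (forall a b c, P a -> P b -> P c ->
     D (mul a b) c = Cadd (D b (mul c a)) (D a (mul b c))).

(* D(a) = a.f - f.a *)
Definition inner_on (D : X -> X -> Cplx) : Prop :=
  exists f, bounded_functional_on f /\
    forall a b, P a -> P b -> D a b = Csub (f (mul b a)) (f (mul a b)).

Definition weakly_amenable_on : Prop :=
  forall D, bounded_derivation_on D -> inner_on D.
End WA.

Definition weakly_amenable (A : BanachAlgebra) : Prop :=
  weakly_amenable_on (@ba_add A) (@ba_scal A) (@ba_mul A) (@ba_norm A)
    (fun _ => True).

Definition contractive_hom (A B : BanachAlgebra) (theta : A -> B) : Prop :=
  (forall x y, theta (ba_add x y) = ba_add (theta x) (theta y)) /\
  (forall c x, theta (ba_scal c x) = ba_scal c (theta x)) /\
  (forall x y, theta (ba_mul x y) = ba_mul (theta x) (theta y)) /\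
  (forall x, ba_norm (theta x) <= ba_norm x).

Definition closed_ideal (B : BanachAlgebra) (I : B -> Prop) : Prop :=
  I ba_zero /\
  (forall x y, I x -> I y -> I (ba_add x y)) /\
  (forall c x, I x -> I (ba_scal c x)) /\
  (forall b x, I x -> I (ba_mul b x)) /\
  (forall b x, I x -> I (ba_mul x b)) /\
  (forall (u : nat -> B) l, (forall n, I (u n)) ->
     (forall eps, 0 < eps -> exists N, forall n, (N <= n)%nat ->
        ba_norm (ba_add (u n) (ba_opp l)) < eps) -> I l).

(** * The amalgamated algebra A ⋈^theta I, as the subset {(a,i) | i ∈ I} of A × B *)
Section Amal.
Context {A B : BanachAlgebra} (theta : A -> B).
Definition amal_add (x y : A * B) : A * B :=
  (ba_add (fst x) (fst y), ba_add (snd x) (snd y)).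
Definition amal_scal (c : Cplx) (x : A * B) : A * B :=
  (ba_scal c (fst x), ba_scal c (snd x)).
Definition amal_mul (x y : A * B) : A * B :=
  (ba_mul (fst x) (fst y),
   ba_add (ba_add (ba_mul (theta (fst x)) (snd y)) (ba_mul (snd x) (theta (fst y))))
          (ba_mul (snd x) (snd y))).
Definition amal_norm (x : A * B) : R := ba_norm (fst x) + ba_norm (snd x).
End Amal.

From Stdlib Require Import Reals Lra.
From Coquelicot Require Complex.
Open Scope R_scope.

(* A bounded derivation D of A ⋈^θ I restricts along the embeddings a ↦ (a,0) and
   i ↦ (0,i) to bounded derivations of A and of I, which are inner, implemented by
   functionals h and g.  The mixed terms D(0,i)(a,0) and D(a,0)(0,j) are then forced
   to be the values g(θ(a)i) - g(iθ(a)) and g(jθ(a)) - g(θ(a)j): the difference is a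
   bounded functional on I vanishing on all products, and a weakly amenable algebra
   admits no such functional except 0, since ψ ⊗ ψ would be a derivation with
   ψ(i)² = 0.  By bilinearity, (a,i) ↦ h(a) + g(i) implements D. *)

Lemma Cplx_ext z w : Cre z = Cre w -> Cim z = Cim w -> z = w.
Proof. destruct z, w; simpl; intros; subst; reflexivity. Qed.

Ltac Cplx_ring := apply Cplx_ext; unfold Csub, Cadd, Copp, Cmul, C0; simpl; ring.

Definition to_C (z : Cplx) : Complex.C := (Cre z, Cim z).

Lemma Cabs_to_C z : Cabs z = Complex.Cmod (to_C z).
Proof. unfold Cabs, Complex.Cmod, to_C; simpl; f_equal; ring. Qed.

Lemma Cabs_ge0 z : 0 <= Cabs z.
Proof. apply sqrt_pos. Qed.

Lemma Cabs_add_le z w : Cabs (Cadd z w) <= Cabs z + Cabs w.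
Proof. rewrite !Cabs_to_C; exact (Complex.Cmod_triangle (to_C z) (to_C w)). Qed.

Lemma Cabs_mul z w : Cabs (Cmul z w) = Cabs z * Cabs w.
Proof. rewrite !Cabs_to_C; exact (Complex.Cmod_mult (to_C z) (to_C w)). Qed.

Lemma Cabs_opp z : Cabs (Copp z) = Cabs z.
Proof. rewrite !Cabs_to_C; exact (Complex.Cmod_opp (to_C z)). Qed.

Lemma Cabs_sub_le z w : Cabs (Csub z w) <= Cabs z + Cabs w.
Proof. unfold Csub; rewrite <- (Cabs_opp w); apply Cabs_add_le. Qed.

Lemma Cabs_C0 : Cabs C0 = 0.
Proof. unfold Cabs, C0; simpl; replace (0 * 0 + 0 * 0) with 0 by ring; apply sqrt_0. Qed.

Lemma Cmul_self_eq0 z : Cmul z z = C0 -> z = C0.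
Proof.
  intro Hzz.
  assert (Habs : Cabs z * Cabs z = 0).
  { rewrite <- Cabs_mul, Hzz; apply Cabs_C0. }
  assert (Hz : to_C z = to_C C0).
  { apply Complex.Cmod_eq_0; rewrite <- Cabs_to_C.
    destruct (Rmult_integral _ _ Habs); assumption. }
  apply Cplx_ext; [apply (f_equal fst Hz) | apply (f_equal snd Hz)].
Qed.

Lemma Csub_eq0 z w : Csub z w = C0 -> z = w.
Proof.
  intro E; pose proof (f_equal Cre E); pose proof (f_equal Cim E).
  unfold Csub, Cadd, Copp, C0 in *; simpl in *; apply Cplx_ext; lra.
Qed.

Section BanachAlgebraFacts.
Variable X : BanachAlgebra.

Lemma ba_addr0 (x : X) : ba_add x ba_zero = x.
Proof. rewrite ba_addC; apply ba_add0. Qed.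

Lemma ba_add_idem_eq0 (y : X) : ba_add y y = y -> y = ba_zero.
Proof.
  intro Hyy; transitivity (ba_add (ba_add y y) (ba_opp y)).
  - rewrite <- ba_addA, ba_addN, ba_addr0; reflexivity.
  - rewrite Hyy; apply ba_addN.
Qed.

Lemma ba_mul0l (x : X) : ba_mul ba_zero x = ba_zero.
Proof. apply ba_add_idem_eq0; rewrite <- ba_mulDl, ba_add0; reflexivity. Qed.

Lemma ba_mul0r (x : X) : ba_mul x ba_zero = ba_zero.
Proof. apply ba_add_idem_eq0; rewrite <- ba_mulDr, ba_add0; reflexivity. Qed.

Lemma ba_scal0 c : ba_scal c (@ba_zero X) = ba_zero.
Proof. apply ba_add_idem_eq0; rewrite <- ba_scalDr, ba_add0; reflexivity. Qed.

Lemma ba_norm0 : ba_norm (@ba_zero X) = 0.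
Proof.
  pose proof (ba_norm_scal X C0 ba_zero) as Hn; rewrite ba_scal0 in Hn.
  rewrite Hn, Cabs_C0; ring.
Qed.
End BanachAlgebraFacts.

Lemma contractive_hom0 (A B : BanachAlgebra) (theta : A -> B) :
  contractive_hom A B theta -> theta ba_zero = ba_zero.
Proof.
  intros [Hadd _]; apply ba_add_idem_eq0; rewrite <- Hadd, ba_add0; reflexivity.
Qed.

Definition bounded_linear_map_on {Y X : Type}
    (addY : Y -> Y -> Y) (scalY : Cplx -> Y -> Y) (normY : Y -> R) (Q : Y -> Prop)
    (addX : X -> X -> X) (scalX : Cplx -> X -> X) (normX : X -> R) (P : X -> Prop)
    (e : Y -> X) : Prop :=
  (forall y, Q y -> P (e y)) /\
  (forall y y', Q y -> Q y' -> e (addY y y') = addX (e y) (e y')) /\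
  (forall c y, Q y -> e (scalY c y) = scalX c (e y)) /\
  (exists K, forall y, Q y -> normX (e y) <= K * normY y).

Definition bounded_hom_on {Y X : Type}
    (addY : Y -> Y -> Y) (scalY : Cplx -> Y -> Y) (mulY : Y -> Y -> Y) (normY : Y -> R)
    (Q : Y -> Prop)
    (addX : X -> X -> X) (scalX : Cplx -> X -> X) (mulX : X -> X -> X) (normX : X -> R)
    (P : X -> Prop) (e : Y -> X) : Prop :=
  bounded_linear_map_on addY scalY normY Q addX scalX normX P e /\
  (forall y y', Q y -> Q y' -> e (mulY y y') = mulX (e y) (e y')).

Section Functionals.
Context {X : Type} {add : X -> X -> X} {scal : Cplx -> X -> X} {mul : X -> X -> X}
  {norm : X -> R} {P : X -> Prop}.

Lemma bounded_functional_add f g :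
  bounded_functional_on add scal norm P f -> bounded_functional_on add scal norm P g ->
  bounded_functional_on add scal norm P (fun x => Cadd (f x) (g x)).
Proof.
  intros [fD [fZ [Mf Hf]]] [gD [gZ [Mg Hg]]]; split; [|split].
  - intros x y Px Py; rewrite fD, gD by assumption; Cplx_ring.
  - intros c x Px; rewrite fZ, gZ by assumption; Cplx_ring.
  - exists (Mf + Mg); intros x Px.
    pose proof (Cabs_add_le (f x) (g x)); pose proof (Hf x Px); pose proof (Hg x Px); lra.
Qed.

Lemma bounded_functional_sub f g :
  bounded_functional_on add scal norm P f -> bounded_functional_on add scal norm P g ->
  bounded_functional_on add scal norm P (fun x => Csub (f x) (g x)).
Proof.
  intros [fD [fZ [Mf Hf]]] [gD [gZ [Mg Hg]]]; split; [|split].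
  - intros x y Px Py; rewrite fD, gD by assumption; Cplx_ring.
  - intros c x Px; rewrite fZ, gZ by assumption; Cplx_ring.
  - exists (Mf + Mg); intros x Px.
    pose proof (Cabs_sub_le (f x) (g x)); pose proof (Hf x Px); pose proof (Hg x Px); lra.
Qed.

Lemma bounded_derivation_left_functional D b :
  bounded_derivation_on add scal mul norm P D -> P b ->
  bounded_functional_on add scal norm P (fun a => D a b).
Proof.
  intros [_ [DD [DZ [[M HM] _]]]] Pb; split; [|split].
  - intros x y Px Py; apply DD; assumption.
  - intros c x Px; apply DZ; assumption.
  - exists (M * norm b); intros x Px.
    replace (M * norm b * norm x) with (M * norm x * norm b) by ring; apply HM; assumption.
Qed.

(* [ψ ⊗ ψ] is a derivation because both sides of the Leibniz rule vanish. *)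
Lemma weakly_amenable_functional_eq0 psi :
  weakly_amenable_on add scal mul norm P ->
  bounded_functional_on add scal norm P psi ->
  (forall x y, P x -> P y -> psi (mul x y) = C0) ->
  forall x, P x -> psi x = C0.
Proof.
  intros WA [psiD [psiZ [M HM]]] psi_mul.
  destruct (WA (fun x y => Cmul (psi x) (psi y))) as [f [_ Hf]].
  - split; [|split; [|split; [|split]]].
    + intros a Pa; split; [|split].
      * intros x y Px Py; rewrite psiD by assumption; Cplx_ring.
      * intros c x Px; rewrite psiZ by assumption; Cplx_ring.
      * exists (Cabs (psi a) * M); intros x Px; rewrite Cabs_mul, Rmult_assoc.
        apply Rmult_le_compat_l; [apply Cabs_ge0 | apply HM; assumption].
    + intros a a' b Pa Pa' Pb; rewrite psiD by assumption; Cplx_ring.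
    + intros c a b Pa Pb; rewrite psiZ by assumption; Cplx_ring.
    + exists (M * M); intros a b Pa Pb; rewrite Cabs_mul.
      replace (M * M * norm a * norm b) with ((M * norm a) * (M * norm b)) by ring.
      apply Rmult_le_compat; try apply Cabs_ge0; apply HM; assumption.
    + intros a b c Pa Pb Pc; rewrite !psi_mul by assumption; Cplx_ring.
  - intros x Px; apply Cmul_self_eq0.
    rewrite (Hf x x Px Px); Cplx_ring.
Qed.
End Functionals.

Section Pullback.
Context {Y X : Type}
  {addY : Y -> Y -> Y} {scalY : Cplx -> Y -> Y} {mulY : Y -> Y -> Y} {normY : Y -> R}
  {Q : Y -> Prop}
  {addX : X -> X -> X} {scalX : Cplx -> X -> X} {mulX : X -> X -> X} {normX : X -> R}
  {P : X -> Prop}.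
Hypothesis normX_ge0 : forall x, 0 <= normX x.

Lemma bounded_functional_comp e f :
  bounded_linear_map_on addY scalY normY Q addX scalX normX P e ->
  bounded_functional_on addX scalX normX P f ->
  bounded_functional_on addY scalY normY Q (fun y => f (e y)).
Proof.
  intros [eP [eD [eZ [K HK]]]] [fD [fZ [M HM]]]; split; [|split].
  - intros y y' Qy Qy'; rewrite eD by assumption; apply fD; auto.
  - intros c y Qy; rewrite eZ by assumption; apply fZ; auto.
  - exists (Rabs M * K); intros y Qy.
    pose proof (HM (e y) (eP y Qy)); pose proof (HK y Qy); pose proof (normX_ge0 (e y)).
    pose proof (Rle_abs M); pose proof (Rabs_pos M).
    apply Rle_trans with (Rabs M * normX (e y)); [nra|].
    rewrite Rmult_assoc; apply Rmult_le_compat_l; assumption.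
Qed.

Lemma bounded_derivation_comp e D :
  bounded_hom_on addY scalY mulY normY Q addX scalX mulX normX P e ->
  bounded_derivation_on addX scalX mulX normX P D ->
  bounded_derivation_on addY scalY mulY normY Q (fun y y' => D (e y) (e y')).
Proof.
  intros [He eM] [DF [DD [DZ [[M HM] DL]]]].
  pose proof He as [eP [eD [eZ [K HK]]]].
  split; [|split; [|split; [|split]]].
  - intros a Qa; apply (bounded_functional_comp e (D (e a))); auto.
  - intros a a' b Qa Qa' Qb; rewrite eD by assumption; apply DD; auto.
  - intros c a b Qa Qb; rewrite eZ by assumption; apply DZ; auto.
  - exists (Rabs M * K * K); intros a b Qa Qb.
    pose proof (HM (e a) (e b) (eP a Qa) (eP b Qb)).
    pose proof (HK a Qa); pose proof (HK b Qb).
    pose proof (normX_ge0 (e a)); pose proof (normX_ge0 (e b)).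
    pose proof (Rle_abs M); pose proof (Rabs_pos M).
    assert (Hab : 0 <= normX (e a) * normX (e b)) by (apply Rmult_le_pos; assumption).
    apply Rle_trans with (Rabs M * (normX (e a) * normX (e b))); [nra|].
    replace (Rabs M * K * K * normY a * normY b)
      with (Rabs M * ((K * normY a) * (K * normY b))) by ring.
    apply Rmult_le_compat_l; [assumption|].
    apply Rmult_le_compat; assumption.
  - intros a b c Qa Qb Qc; rewrite !eM by assumption; apply DL; auto.
Qed.
End Pullback.

Section IdealMultipliers.
Variables (B : BanachAlgebra) (I : B -> Prop).
Hypothesis HI : closed_ideal B I.

Lemma closed_ideal_mull_bounded b :
  bounded_linear_map_on ba_add ba_scal ba_norm I ba_add ba_scal ba_norm I (ba_mul b).
Proof.
  destruct HI as [_ [_ [_ [IL _]]]]; split; [|split; [|split]].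
  - intros y Iy; apply IL; assumption.
  - intros y y' _ _; apply ba_mulDr.
  - intros c y _; symmetry; apply ba_scal_mulr.
  - exists (ba_norm b); intros y _; apply ba_norm_mul.
Qed.

Lemma closed_ideal_mulr_bounded b :
  bounded_linear_map_on ba_add ba_scal ba_norm I ba_add ba_scal ba_norm I
    (fun x => ba_mul x b).
Proof.
  destruct HI as [_ [_ [_ [_ [IR _]]]]]; split; [|split; [|split]].
  - intros y Iy; apply IR; assumption.
  - intros y y' _ _; apply ba_mulDl.
  - intros c y _; symmetry; apply ba_scal_mull.
  - exists (ba_norm b); intros y _; rewrite Rmult_comm; apply ba_norm_mul.
Qed.
End IdealMultipliers.

Section Amalgam.
Variables (A B : BanachAlgebra) (theta : A -> B) (I : B -> Prop).
Hypothesis Htheta : contractive_hom A B theta.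
Hypothesis HI : closed_ideal B I.

Let theta0 : theta ba_zero = ba_zero := contractive_hom0 A B theta Htheta.
Let I0 : I ba_zero := proj1 HI.

Lemma amal_norm_ge0 (x : A * B) : 0 <= amal_norm x.
Proof.
  unfold amal_norm; pose proof (ba_norm_ge0 A (fst x)); pose proof (ba_norm_ge0 B (snd x)).
  lra.
Qed.

Lemma amal_mul_AA (a a' : A) :
  amal_mul theta (a, ba_zero) (a', ba_zero) = (ba_mul a a', ba_zero).
Proof. unfold amal_mul; simpl; rewrite !ba_mul0r, !ba_mul0l, !ba_add0; reflexivity. Qed.

Lemma amal_mul_II (i j : B) :
  amal_mul theta (ba_zero, i) (ba_zero, j) = (ba_zero, ba_mul i j).
Proof. unfold amal_mul; simpl; rewrite theta0, !ba_mul0r, !ba_mul0l, !ba_add0; reflexivity. Qed.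

Lemma amal_mul_AI (a : A) (i : B) :
  amal_mul theta (a, ba_zero) (ba_zero, i) = (ba_zero, ba_mul (theta a) i).
Proof. unfold amal_mul; simpl; rewrite theta0, !ba_mul0r, !ba_mul0l, !ba_addr0; reflexivity. Qed.

Lemma amal_mul_IA (a : A) (i : B) :
  amal_mul theta (ba_zero, i) (a, ba_zero) = (ba_zero, ba_mul i (theta a)).
Proof.
  unfold amal_mul; simpl; rewrite theta0, !ba_mul0r, !ba_mul0l, ba_add0, ba_addr0.
  reflexivity.
Qed.

Lemma amal_inA_hom :
  bounded_hom_on (@ba_add A) (@ba_scal A) (@ba_mul A) (@ba_norm A) (fun _ => True)
    (@amal_add A B) (@amal_scal A B) (amal_mul theta) (@amal_norm A B)
    (fun p => I (snd p)) (fun a => (a, ba_zero)).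
Proof.
  split; [split; [|split; [|split]]|].
  - intros; exact I0.
  - intros a a' _ _; unfold amal_add; simpl; rewrite ba_add0; reflexivity.
  - intros c a _; unfold amal_scal; simpl; rewrite ba_scal0; reflexivity.
  - exists 1; intros a _; unfold amal_norm; simpl; rewrite ba_norm0; lra.
  - intros a a' _ _; symmetry; apply amal_mul_AA.
Qed.

Lemma amal_inI_hom :
  bounded_hom_on (@ba_add B) (@ba_scal B) (@ba_mul B) (@ba_norm B) I
    (@amal_add A B) (@amal_scal A B) (amal_mul theta) (@amal_norm A B)
    (fun p => I (snd p)) (fun i => (ba_zero, i)).
Proof.
  split; [split; [|split; [|split]]|].
  - intros i Ii; exact Ii.
  - intros i j _ _; unfold amal_add; simpl; rewrite ba_add0; reflexivity.
  - intros c i _; unfold amal_scal; simpl; rewrite ba_scal0; reflexivity.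
  - exists 1; intros i _; unfold amal_norm; simpl; rewrite ba_norm0; lra.
  - intros i j _ _; symmetry; apply amal_mul_II.
Qed.

Lemma amal_fst_bounded :
  bounded_linear_map_on (@amal_add A B) (@amal_scal A B) (@amal_norm A B)
    (fun p => I (snd p)) (@ba_add A) (@ba_scal A) (@ba_norm A) (fun _ => True) fst.
Proof.
  split; [|split; [|split]]; try reflexivity; try (intros; exact Logic.I).
  exists 1; intros [a i] _; unfold amal_norm; simpl; pose proof (ba_norm_ge0 B i); lra.
Qed.

Lemma amal_snd_bounded :
  bounded_linear_map_on (@amal_add A B) (@amal_scal A B) (@amal_norm A B)
    (fun p => I (snd p)) (@ba_add B) (@ba_scal B) (@ba_norm B) I snd.
Proof.
  split; [|split; [|split]]; try reflexivity; try (intros; assumption).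
  exists 1; intros [a i] _; unfold amal_norm; simpl; pose proof (ba_norm_ge0 A a); lra.
Qed.

Lemma amal_derivation_split D a i a' j :
  bounded_derivation_on (@amal_add A B) (@amal_scal A B) (amal_mul theta)
    (@amal_norm A B) (fun p => I (snd p)) D ->
  I i -> I j ->
  D (a, i) (a', j) =
  Cadd (Cadd (D (a, ba_zero) (a', ba_zero)) (D (a, ba_zero) (ba_zero, j)))
       (Cadd (D (ba_zero, i) (a', ba_zero)) (D (ba_zero, i) (ba_zero, j))).
Proof.
  intros [DF [DD _]] Ii Ij.
  assert (split_pair : forall (x : A) (y : B), (x, y) = amal_add (x, ba_zero) (ba_zero, y)).
  { intros x y; unfold amal_add; simpl; rewrite ba_add0, ba_addr0; reflexivity. }
  rewrite (split_pair a i), DD by (simpl; assumption).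
  rewrite (split_pair a' j), (proj1 (DF (a, ba_zero) I0)), (proj1 (DF (ba_zero, i) Ii))
    by (simpl; assumption).
  reflexivity.
Qed.

Section MixedTerms.
Variables (D : A * B -> A * B -> Cplx) (g : B -> Cplx).
Hypothesis WI : weakly_amenable_on (@ba_add B) (@ba_scal B) (@ba_mul B) (@ba_norm B) I.
Hypothesis HD : bounded_derivation_on (@amal_add A B) (@amal_scal A B) (amal_mul theta)
  (@amal_norm A B) (fun p => I (snd p)) D.
Hypothesis Hg : bounded_functional_on (@ba_add B) (@ba_scal B) (@ba_norm B) I g.
Hypothesis gE : forall i j, I i -> I j ->
  D (ba_zero, i) (ba_zero, j) = Csub (g (ba_mul j i)) (g (ba_mul i j)).

Let g_mull_bounded b :
  bounded_functional_on (@ba_add B) (@ba_scal B) (@ba_norm B) I (fun x => g (ba_mul b x)) :=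
  bounded_functional_comp (ba_norm_ge0 B) _ g (closed_ideal_mull_bounded B I HI b) Hg.

Let g_mulr_bounded b :
  bounded_functional_on (@ba_add B) (@ba_scal B) (@ba_norm B) I (fun x => g (ba_mul x b)) :=
  bounded_functional_comp (ba_norm_ge0 B) _ g (closed_ideal_mulr_bounded B I HI b) Hg.

Lemma amal_derivation_IA a i : I i ->
  D (ba_zero, i) (a, ba_zero) = Csub (g (ba_mul (theta a) i)) (g (ba_mul i (theta a))).
Proof.
  intro Ii; apply Csub_eq0.
  refine (weakly_amenable_functional_eq0 (fun x =>
    Csub (D (ba_zero, x) (a, ba_zero))
         (Csub (g (ba_mul (theta a) x)) (g (ba_mul x (theta a))))) WI _ _ i Ii).
  - apply bounded_functional_sub; [| apply bounded_functional_sub; auto].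
    exact (bounded_functional_comp amal_norm_ge0 _ _ (proj1 amal_inI_hom)
             (bounded_derivation_left_functional D (a, ba_zero) HD I0)).
  - intros x y Ix Iy; destruct HD as [_ [_ [_ [_ DL]]]].
    pose proof HI as [_ [_ [_ [IL [IR _]]]]].
    pose proof (DL (ba_zero, x) (ba_zero, y) (a, ba_zero) Ix Iy I0) as Leibniz.
    rewrite amal_mul_II, amal_mul_AI, amal_mul_IA in Leibniz.
    rewrite Leibniz, !gE by auto; rewrite !ba_mulA; Cplx_ring.
Qed.

Lemma amal_derivation_AI a j : I j ->
  D (a, ba_zero) (ba_zero, j) = Csub (g (ba_mul j (theta a))) (g (ba_mul (theta a) j)).
Proof.
  intro Ij; apply Csub_eq0.
  refine (weakly_amenable_functional_eq0 (fun x =>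
    Csub (D (a, ba_zero) (ba_zero, x))
         (Csub (g (ba_mul x (theta a))) (g (ba_mul (theta a) x)))) WI _ _ j Ij).
  - apply bounded_functional_sub; [| apply bounded_functional_sub; auto].
    exact (bounded_functional_comp amal_norm_ge0 _ _ (proj1 amal_inI_hom)
             (proj1 HD (a, ba_zero) I0)).
  - intros x y Ix Iy; destruct HD as [_ [_ [_ [_ DL]]]].
    pose proof HI as [_ [_ [_ [IL [IR _]]]]].
    pose proof (DL (a, ba_zero) (ba_zero, x) (ba_zero, y) I0 Ix Iy) as Leibniz.
    rewrite amal_mul_II, amal_mul_AI, amal_mul_IA, !gE in Leibniz by auto.
    rewrite !ba_mulA in Leibniz; rewrite !ba_mulA.
    pose proof (f_equal Cre Leibniz); pose proof (f_equal Cim Leibniz).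
    apply Cplx_ext; unfold Csub, Cadd, Copp, C0 in *; simpl in *; lra.
Qed.
End MixedTerms.
End Amalgam.

Theorem proposition6p3 (A B : BanachAlgebra) (theta : A -> B)
  (Htheta : contractive_hom A B theta) (I : B -> Prop) (HI : closed_ideal B I) :
  weakly_amenable A ->
  weakly_amenable_on (@ba_add B) (@ba_scal B) (@ba_mul B) (@ba_norm B) I ->
  weakly_amenable_on (@amal_add A B) (@amal_scal A B) (amal_mul theta)
    (@amal_norm A B) (fun p => I (snd p)).
Proof.
  intros WA WI D HD.
  destruct (WA _ (bounded_derivation_comp (amal_norm_ge0 A B) _ D
                    (amal_inA_hom A B theta I HI) HD)) as [h [Hh hE]].
  destruct (WI _ (bounded_derivation_comp (amal_norm_ge0 A B) _ D
                    (amal_inI_hom A B theta I Htheta) HD)) as [g [Hg gE]].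
  exists (fun x => Cadd (h (fst x)) (g (snd x))); split.
  - apply bounded_functional_add.
    + exact (bounded_functional_comp (ba_norm_ge0 A) _ h (amal_fst_bounded A B I) Hh).
    + exact (bounded_functional_comp (ba_norm_ge0 B) _ g (amal_snd_bounded A B I) Hg).
  - intros [a i] [a' j] Ii Ij; simpl in Ii, Ij.
    rewrite (amal_derivation_split A B theta I HI) by assumption.
    rewrite (hE a a' Logic.I Logic.I), (gE i j Ii Ij).
    rewrite (amal_derivation_AI A B theta I Htheta HI D g WI HD Hg gE) by assumption.
    rewrite (amal_derivation_IA A B theta I Htheta HI D g WI HD Hg gE) by assumption.
    destruct HI as [_ [Iadd [_ [IL [IR _]]]]].
    unfold amal_mul; simpl; rewrite !(proj1 Hg) by auto; Cplx_ring.
Qed.
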